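(* Let $q=4$, $e=6$, and $n=65921=1+2q^3+q^4+q^8$. Then $$g_{n,q}\equiv S_3^2+S_4^{q^2+1}\pmod{x^{q^e}-x},$$ and $g_{n,q}$ is a permutation polynomial of $\mathbb{F}_{q^e}=\mathbb{F}_{4^6}$.
   Context: For a prime power $q$ with characteristic $p$ and integer $n\ge0$, $g_{n,q}\in\mathbb{F}_p[x]$ is the unique polynomial satisfying $\sum_{a\in\mathbb{F}_q}(x+a)^n=g_{n,q}(x^q-x)$. For a positive integer $m$, $S_m=x+x^q+\cdots+x^{q^{m-1}}\in\mathbb{F}_p[x]$; exponents on $S_m$ denote powers of polynomials. A polynomial $f$ is a permutation polynomial of $\mathbb{F}_Q$ if $c\mapsto f(c)$ is a bijection of $\mathbb{F}_Q$. *)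

From HB Require Import structures.
From mathcomp Require Import all_boot all_order all_algebra all_field.
Set Implicit Arguments. Unset Strict Implicit. Unset Printing Implicit Defensive.
Import GRing.Theory.
Local Open Scope ring_scope.

Notation F2 := 'F_2.

(* Canonical embedding of F_2 = {0,1} into a ring R (a ring morphism
   whenever R has characteristic 2). *)
Definition F2toR (R : nzRingType) (c : F2) : R := (nat_of_ord c)%:R.

Definition liftp (R : nzRingType) (g : {poly F2}) : {poly R} :=
  map_poly (@F2toR R) g.

Definition Ssum (q m : nat) : {poly F2} := \sum_(i < m) 'X^(q ^ i).

(* Defining property of g_{n,q} in F_p[x], where F = F_q (q = #|F|):
   sum_{a in F_q} (x + a)^n = g_{n,q}(x^q - x)  in F_q[x]. *)
Definition is_g (F : finFieldType) (n : nat) (g : {poly F2}) : Prop :=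
  \sum_(a : F) ('X + a%:P) ^+ n = (liftp F g) \Po ('X^#|F| - 'X).

Definition is_perm_poly (K : finFieldType) (f : {poly F2}) : Prop :=
  bijective (fun c : K => (liftp K f).[c]).

From HB Require Import structures.
From mathcomp Require Import all_boot all_order all_algebra all_field.
From mathcomp Require Import ring.
Import GRing.Theory.
Set Implicit Arguments.
Unset Strict Implicit.
Unset Printing Implicit Defensive.
Local Open Scope ring_scope.

(* Since a^4 = a on F_4, the sum of (X + a)^n over a in F_4 only keeps the
   a^3-coefficient of (X + a)(X^(4^3) + a)^2 (X^(4^4) + a)(X^(4^8) + a), and this
   coefficient is (S_8 S_4 + S_3^2)(X^4 - X) because S_m(X^4 - X) = X^(4^m) - X.
   Reducing S_8 modulo X^(4^6) - X gives the congruence.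
   On F_(4^6), with c_i = c^(4^i) and phi the Frobenius c |-> c^4, the value
   g_n(c) is a polynomial in c_0, ..., c_5.  If g_n(c) = g_n(d) and e = c + d,
   then (e_1 + e_2 + e_3 + e_4)^2 = (phi^2 + phi^4)(g_n(c) + g_n(d)) = 0, which
   forces phi^2 e = e; for such e, g_n(d + e) = g_n(d) + (phi e)^2, so e = 0. *)

Section Char2.
Variable R : comNzRingType.
Hypothesis R2 : 2 \in [pchar R].

Lemma eq_pchar2 (x y w : R) : x = y + 2%:R * w -> x = y.
Proof. by rewrite (pcharf0 R2) mul0r addr0. Qed.

Lemma pchar2_nat_exp2 k : [pchar R].-nat (2 ^ k)%N.
Proof. by rewrite (eq_pnat _ (pcharf_eq R2)) pnatX pnat_id. Qed.

Lemma sqrD_pchar2 (x y : R) : (x + y) ^+ 2 = x ^+ 2 + y ^+ 2.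
Proof. exact: (exprDn_pchar _ _ (pchar2_nat_exp2 1)). Qed.

Lemma exprDn4_pchar2 (x y : R) i : (x + y) ^+ (4 ^ i) = x ^+ (4 ^ i) + y ^+ (4 ^ i).
Proof. by rewrite -(expnM 2 2 i) exprDn_pchar ?pchar2_nat_exp2. Qed.

Lemma exprD4_pchar2 (x y : R) : (x + y) ^+ 4 = x ^+ 4 + y ^+ 4.
Proof. exact: (exprDn4_pchar2 x y 1). Qed.

(* With y_i = c^(4^i) and c^(4^6) = c, this is (S_8 S_4 + S_3^2)(c). *)
Definition gconj (y0 y1 y2 y3 y4 y5 : R) : R :=
  (y0 + y1 + y2) ^+ 2 + (y0 + y1 + y2 + y3) * (y2 + y3 + y4 + y5).

Lemma sqr_sum4_gconj (y0 y1 y2 y3 y4 y5 : R) :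
  (y1 + y2 + y3 + y4) ^+ 2 = gconj y2 y3 y4 y5 y0 y1 + gconj y4 y5 y0 y1 y2 y3.
Proof.
apply: (@eq_pchar2 _ _
  (y1 * (y2 + y3 + y4) - (y0 + y1 + y4 + y5) * (y0 + y2 + y3 + y4 + y5))).
by rewrite /gconj; ring.
Qed.

Lemma gconj_addr_period2 (y0 y1 y2 y3 y4 y5 z0 z1 : R) :
  gconj (y0 + z0) (y1 + z1) (y2 + z0) (y3 + z1) (y4 + z0) (y5 + z1)
  = gconj y0 y1 y2 y3 y4 y5 + z1 ^+ 2.
Proof.
apply: (@eq_pchar2 _ _ ((y0 + y1 + y2) * (2%:R * z0 + z1)
  + (z0 + z1) * (y0 + y1 + 2%:R * y2 + 2%:R * y3 + y4 + y5 + 2%:R * (z0 + z1))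
  + 2%:R * z0 * (z0 + z1))).
by rewrite /gconj; ring.
Qed.

End Char2.

Section Orbit.
Variable K : fieldType.
Hypothesis K2 : 2 \in [pchar K].
Variable phi : K -> K.
Hypothesis phiD : {morph phi : x y / x + y}.
Hypothesis phiM : {morph phi : x y / x * y}.
Hypothesis phi6 : forall x, iter 6 phi x = x.

Definition gorbit (c : K) : K :=
  gconj c (phi c) (iter 2 phi c) (iter 3 phi c) (iter 4 phi c) (iter 5 phi c).

Let phi6E x : phi (phi (phi (phi (phi (phi x))))) = x. Proof. exact: phi6. Qed.

Let phi0 : phi 0 = 0.
Proof. by apply: (addrI (phi 0)); rewrite -phiD !addr0. Qed.

Lemma sqr_orbit_sum4 c :
  (phi c + iter 2 phi c + iter 3 phi c + iter 4 phi c) ^+ 2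
  = iter 2 phi (gorbit c) + iter 4 phi (gorbit c).
Proof.
by rewrite /gorbit /gconj /= !(phiD, phiM) !phi6E; exact: sqr_sum4_gconj.
Qed.

Lemma orbit_period2 e :
  phi e + iter 2 phi e + iter 3 phi e + iter 4 phi e = 0 -> iter 2 phi e = e.
Proof.
move=> sum4_e.
have sum4_e0 : e + phi e + iter 2 phi e + iter 3 phi e = 0.
  by move: (congr1 (iter 5 phi) sum4_e); rewrite /= !phiD !phi0 !phi6E.
have e4 : e + iter 4 phi e = 0.
  rewrite -(addr0 0) -{1}sum4_e0 -sum4_e.
  by apply: (eq_pchar2 K2 (w := - (phi e + iter 2 phi e + iter 3 phi e))); ring.
move/eqP: e4; rewrite addr_eq0 oppr_pchar2 // => /eqP {1}->.
by rewrite /= phi6E.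
Qed.

Lemma gorbit_addr_period2 d e :
  iter 2 phi e = e -> gorbit (d + e) = gorbit d + phi e ^+ 2.
Proof.
by move=> /= e2; rewrite /gorbit /= !phiD !e2; exact: gconj_addr_period2.
Qed.

Lemma gorbit_inj : injective gorbit.
Proof.
move=> c d eq_g; pose e := c + d.
have def_c : c = d + e by rewrite /e addrCA addrr_pchar2 // addr0.
have sum4_e : phi e + iter 2 phi e + iter 3 phi e + iter 4 phi e = 0.
  apply/eqP; rewrite -sqrf_eq0; apply/eqP.
  have -> : phi e + iter 2 phi e + iter 3 phi e + iter 4 phi e
      = (phi c + iter 2 phi c + iter 3 phi c + iter 4 phi c)
      + (phi d + iter 2 phi d + iter 3 phi d + iter 4 phi d).
    by rewrite /e /= !phiD; ring.
  by rewrite sqrD_pchar2 // !sqr_orbit_sum4 eq_g addrr_pchar2.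
have /(gorbit_addr_period2 d) := orbit_period2 sum4_e.
rewrite -def_c eq_g -{1}[gorbit d]addr0 => /addrI /esym /eqP.
rewrite sqrf_eq0 => /eqP phi_e0.
by rewrite def_c -[e]phi6 /= phi_e0 !phi0 addr0.
Qed.

End Orbit.

Section PowerSums.
Variable F : finFieldType.

Lemma sum_expr_eq0 (c : F) k : c != 0 -> c ^+ k != 1 -> \sum_(a : F) a ^+ k = 0.
Proof.
move=> c0 ck; set s := \sum_(a : F) a ^+ k.
have s_c : s = c ^+ k * s.
  rewrite {1}/s (reindex_inj (mulfI c0)) mulr_sumr.
  by apply: eq_bigr => a _; rewrite exprMn.
have : (1 - c ^+ k) * s = 0 by rewrite mulrBl mul1r -s_c subrr.
by move/eqP; rewrite mulf_eq0 subr_eq0 eq_sym (negbTE ck) => /eqP.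
Qed.

Lemma sum_expr_card_pred : \sum_(a : F) a ^+ #|F|.-1 = #|F|.-1%:R.
Proof.
have q_gt1 : (1 < #|F|)%N by apply/card_gt1P; exists 1, 0; rewrite oner_neq0.
have q'_gt0 : (0 < #|F|.-1)%N by rewrite -ltnS prednK // ltnW.
rewrite (bigD1 0) //= expr0n eqn0Ngt q'_gt0 add0r.
rewrite (eq_bigr (fun _ => 1)) => [|a a0]; first by rewrite sumr_const cardC1.
by apply: (mulfI a0); rewrite mulr1 -exprS prednK ?expf_card // ltnW.
Qed.

End PowerSums.

Lemma comp_polyXn (R : comNzRingType) (p : {poly R}) n : 'X^n \Po p = p ^+ n.
Proof.
by elim: n => [|n IHn]; rewrite ?comp_polyC // !exprS comp_polyM comp_polyX IHn.
Qed.

Definition gn : {poly 'F_2} := Ssum 4 8 * Ssum 4 4 + Ssum 4 3 ^+ 2.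

Section Lift.
Variable R : comNzRingType.
Hypothesis R2 : 2 \in [pchar R].

Lemma F2toR_is_nmod_morphism : nmod_morphism (@F2toR R).
Proof.
split=> [|[[|[|x]] ?] [[|[|y]] ?]] //; rewrite /F2toR /= ?add0r ?addr0 //.
by rewrite addrr_pchar2.
Qed.

Lemma F2toR_is_monoid_morphism : monoid_morphism (@F2toR R).
Proof.
split=> [|[[|[|x]] ?] [[|[|y]] ?]] //; rewrite /F2toR /= ?mul0r ?mulr0 ?mulr1 //.
Qed.

HB.instance Definition _ :=
  GRing.isNmodMorphism.Build _ _ (@F2toR R) F2toR_is_nmod_morphism.
HB.instance Definition _ :=
  GRing.isMonoidMorphism.Build _ _ (@F2toR R) F2toR_is_monoid_morphism.

Lemma liftp_Ssum m : liftp R (Ssum 4 m) = \sum_(i < m) 'X^(4 ^ i).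
Proof. by rewrite /liftp rmorph_sum; apply: eq_bigr => i _; apply: map_polyXn. Qed.

Lemma Ssum_comp m : liftp R (Ssum 4 m) \Po ('X^4 - 'X) = 'X^(4 ^ m) - 'X.
Proof.
have R2X : 2 \in [pchar {poly R}] by rewrite pchar_poly.
rewrite liftp_Ssum; elim: m => [|m IHm]; first by rewrite big_ord0 comp_poly0 expr1 subrr.
rewrite big_ord_recr /= comp_polyD IHm comp_polyXn !oppr_pchar2 //.
rewrite exprDn4_pchar2 // -exprM -expnS.
by apply: (eq_pchar2 R2X (w := 'X^(4 ^ m))); ring.
Qed.

Lemma liftp_gn :
  liftp R gn = liftp R (Ssum 4 8) * liftp R (Ssum 4 4) + liftp R (Ssum 4 3) ^+ 2.
Proof. by rewrite /gn /liftp rmorphD rmorphM rmorphXn. Qed.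

End Lift.

Section FieldOfOrder4.
Variable F : finFieldType.
Hypothesis F4 : #|F| = 4%N.

Lemma F4_pchar2 : 2 \in [pchar F].
Proof. by apply: (@card_finPcharP _ 2 2); rewrite ?F4. Qed.
Let F2 := F4_pchar2.
Let F2X : 2 \in [pchar {poly F}]. Proof. by rewrite pchar_poly. Qed.

Lemma expr4_F4 (a : F) : a ^+ 4 = a.
Proof. by rewrite -{1}F4 expf_card. Qed.

Lemma exprn4_F4 (a : F) k : a ^+ (4 ^ k) = a.
Proof. by elim: k => [|k IHk]; rewrite ?expr1 // expnSr exprM IHk expr4_F4. Qed.

Lemma sum_expr_F4 k : (k < 6)%N -> \sum_(a : F) a ^+ k = (k == 3)%:R.
Proof.
have [c _] : exists2 c : F, c \in [set: F] & c \notin [set 0; 1].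
  apply/subsetPn; apply/negP => /subset_leq_card.
  by rewrite cardsT F4 cards2 eq_sym oner_eq0.
rewrite !inE negb_or => /andP[c0 c1].
have c2 : c ^+ 2 != 1.
  by apply: contraNneq c1 => c2_1; rewrite -[c]expr4_F4 (exprM c 2 2) c2_1 expr1n.
case: k => [_|[_|[_|[_|[_|[|//]]]]]].
- by rewrite sumr_const F4 (mulrnA 1 2 2) !(mulrn_pchar F2).
- by rewrite (sum_expr_eq0 c0) ?expr1.
- by rewrite (sum_expr_eq0 c0).
- rewrite (_ : 3 = #|F|.-1)%N; last by rewrite F4.
  rewrite sum_expr_card_pred F4.
  by rewrite (natrD _ 1 2) (pcharf0 F2) addr0.
- by rewrite (sum_expr_eq0 c0) ?expr4_F4.
- by rewrite (sum_expr_eq0 c0) // exprS expr4_F4 -expr2.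
Qed.

Lemma sum_polyC_expr_F4 k : (k < 6)%N ->
  \sum_(a : F) a%:P ^+ k = (k == 3)%:R :> {poly F}.
Proof.
move=> k_lt6; rewrite -polyC_natr -(sum_expr_F4 k_lt6) raddf_sum.
by apply: eq_bigr => a _; rewrite /= polyC_exp.
Qed.

Lemma sum_quintic_F4 (c0 c1 c2 c3 c4 c5 : {poly F}) :
  \sum_(a : F) (c0 + c1 * a%:P + c2 * a%:P ^+ 2 + c3 * a%:P ^+ 3
                + c4 * a%:P ^+ 4 + c5 * a%:P ^+ 5) = c3.
Proof.
rewrite !big_split /= -!mulr_sumr sumr_const F4 (mulrnA _ 2 2) (mulrn_pchar F2X).
rewrite -[\sum_(a : F) a%:P](eq_bigr _ (fun a _ => expr1 a%:P)).
rewrite !sum_polyC_expr_F4 //=.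
by rewrite !mulr0 mulr1 !(add0r, addr0).
Qed.

Lemma sum_translates_expn :
  \sum_(a : F) ('X + a%:P) ^+ (1 + 2 * 4 ^ 3 + 4 ^ 4 + 4 ^ 8)
  = 'X^(4 ^ 3) ^+ 2 + 'X * 'X^(4 ^ 4) + 'X * 'X^(4 ^ 8) + 'X^(4 ^ 4) * 'X^(4 ^ 8)
  :> {poly F}.
Proof.
have translate_Frob k a : ('X + a%:P) ^+ (4 ^ k) = 'X^(4 ^ k) + a%:P :> {poly F}.
  by rewrite exprDn4_pchar2 // -polyC_exp exprn4_F4.
set T : {poly F} := 'X^(4 ^ 3); set V : {poly F} := 'X^(4 ^ 4).
set U : {poly F} := 'X^(4 ^ 8).
rewrite -(sum_quintic_F4 ('X * V * U * T ^+ 2) (('X * V + 'X * U + V * U) * T ^+ 2)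
  (('X + V + U) * T ^+ 2 + 'X * V * U) (T ^+ 2 + 'X * V + 'X * U + V * U)
  ('X + V + U) 1).
apply: eq_bigr => a _.
rewrite !exprD expr1 mulnC exprM !translate_Frob sqrD_pchar2 // -/T -/V -/U.
ring.
Qed.

Lemma is_g_gn : is_g F (1 + 2 * 4 ^ 3 + 4 ^ 4 + 4 ^ 8) gn.
Proof.
rewrite /is_g sum_translates_expn F4 (liftp_gn F2) comp_polyD comp_polyM.
rewrite [liftp _ _ ^+ 2]expr2 comp_polyM !Ssum_comp // !oppr_pchar2 //.
by apply: (eq_pchar2 F2X (w := - ('X ^+ 2 + 'X^(4 ^ 3) * 'X))); ring.
Qed.

End FieldOfOrder4.

Lemma F2toR_inj (R : nzRingType) : injective (@F2toR R).
Proof.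
move=> [[|[|x]] ?] [[|[|y]] ?] //; rewrite /F2toR /=.
- by move=> _; apply: val_inj.
- by move/eqP; rewrite eq_sym oner_eq0.
- by move/eqP; rewrite oner_eq0.
- by move=> _; apply: val_inj.
Qed.

Lemma is_g_unique (F : finFieldType) n g1 g2 : is_g F n g1 -> is_g F n g2 -> g1 = g2.
Proof.
have q_gt1 : (1 < #|F|)%N by apply/card_gt1P; exists 1, 0; rewrite oner_neq0.
rewrite /is_g => -> /eqP; rewrite -subr_eq0 -comp_polyB comp_poly_eq0; last first.
  by rewrite size_polyDl ?size_polyN ?size_polyXn ?size_polyX ltnS ?(ltnW q_gt1).
by rewrite subr_eq0 => /eqP /(map_inj_poly (@F2toR_inj F)); apply.
Qed.

Section FieldOfOrder4096.
Variable K : finFieldType.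
Hypothesis K4096 : #|K| = (4 ^ 6)%N.

Lemma K4096_pchar2 : 2 \in [pchar K].
Proof. by apply: (@card_finPcharP _ 2 12); rewrite ?K4096. Qed.
Let K2 := K4096_pchar2.

Local Notation frob4 := (fun x : K => x ^+ 4).

Lemma iter_frob4 i c : iter i frob4 c = c ^+ (4 ^ i).
Proof. by elim: i => [|i IHi]; rewrite ?expr1 //= IHi -exprM -expnSr. Qed.

Lemma iter6_frob4 c : iter 6 frob4 c = c.
Proof. by rewrite iter_frob4 -K4096 expf_card. Qed.

Lemma horner_gn c : (liftp K gn).[c] = gorbit frob4 c.
Proof.
rewrite (liftp_gn K2) hornerD hornerM horner_exp !(liftp_Ssum K2) !horner_sum.
rewrite !big_ord_recr !big_ord0 /= !hornerXn -!iter_frob4.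
rewrite [iter 7 _ _]iterS !iter6_frob4 /gorbit /=.
apply: (eq_pchar2 K2 (w := (c + c ^+ 4) * (c + c ^+ 4 + c ^+ 4 ^+ 4 + c ^+ 4 ^+ 4 ^+ 4))).
by rewrite /gconj; ring.
Qed.

Lemma is_perm_poly_gn : is_perm_poly K gn.
Proof.
have frob4D : {morph frob4 : x y / x + y}.
  by move=> x y; rewrite exprD4_pchar2.
have frob4M : {morph frob4 : x y / x * y} by move=> x y; rewrite exprMn.
apply: injF_bij => c d; rewrite !horner_gn.
exact: (gorbit_inj K2 frob4D frob4M iter6_frob4).
Qed.

End FieldOfOrder4096.

Lemma Ssum8E : Ssum 4 8 = Ssum 4 4 ^+ (4 ^ 2) + ('X^(4 ^ 6) - 'X) + ('X^(4 ^ 6) - 'X) ^+ 4.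
Proof.
have F2X : 2 \in [pchar {poly 'F_2}] by rewrite pchar_poly pchar_Fp.
rewrite /Ssum !big_ord_recr !big_ord0 /= !oppr_pchar2 //.
by rewrite exprD4_pchar2 // !exprDn4_pchar2 // -!exprM; ring.
Qed.

Lemma modp_gn : gn %% ('X^(4 ^ 6) - 'X)
  = (Ssum 4 3 ^+ 2 + Ssum 4 4 ^+ (4 ^ 2 + 1)) %% ('X^(4 ^ 6) - 'X).
Proof.
set M : {poly 'F_2} := 'X^(4 ^ 6) - 'X.
have -> : gn = (Ssum 4 3 ^+ 2 + Ssum 4 4 ^+ (4 ^ 2 + 1)) + (1 + M ^+ 3) * Ssum 4 4 * M.
  by rewrite /gn Ssum8E -/M exprD expr1; ring.
by rewrite modpD modp_mull addr0.
Qed.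

Theorem mainTheorem5 :
  forall F : finFieldType, #|F| = 4%N ->
    (exists g : {poly 'F_2}, is_g F (1 + 2 * 4 ^ 3 + 4 ^ 4 + 4 ^ 8) g) /\
    (forall g : {poly 'F_2}, is_g F (1 + 2 * 4 ^ 3 + 4 ^ 4 + 4 ^ 8) g ->
       g %% ('X^(4 ^ 6) - 'X)
         = (Ssum 4 3 ^+ 2 + Ssum 4 4 ^+ (4 ^ 2 + 1)) %% ('X^(4 ^ 6) - 'X)
       /\ (forall K : finFieldType, #|K| = (4 ^ 6)%N -> is_perm_poly K g)).
Proof.
move=> F F4; split; first by exists gn; exact: is_g_gn.
move=> g /(is_g_unique (is_g_gn F4)) <-; split; first exact: modp_gn.
by move=> K K4096; exact: is_perm_poly_gn.
Qed.
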